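(* There exists a constant $C=C(\underline h,\overline h,\underline w,\overline w)>0$ such that for every grid size $N\in\mathbb{N}$ there exists a ReLU FNO $\mathcal{N}^{\mathrm{FNO}}$ with constant (in $x$) output function, $k_{\max}=0$, $d_v\le C$, depth $\le C$, size $\le C$, such that for every input $\bar u=h\,1_{[-w/2,w/2]}(\cdot-\xi)$ with $h\in[\underline h,\overline h]$, $w\in[\underline w,\overline w]$, $\xi\in[0,2\pi]$, \[ \big|\mathcal{N}^{\mathrm{FNO}}(\bar u)(x)-w\big|\le\frac CN\quad\text{for all }x\in\mathbb{T}. \]
   Context: $\mathbb{T}=\mathbb{R}/2\pi\mathbb{Z}$; $0<\underline h<\overline h$, $0<\underline w<\overline w<2\pi$; $1_{[-w/2,w/2]}$ is periodized. FNO with grid size $N$: $x_j=2\pi j/N$, $\mathcal{F}_Nv(k)=\frac1N\sum_{j=1}^Nv(x_j)e^{-ikx_j}$; an FNO with lifting dimension $d_v$, cut-off $k_{\max}$, depth $L$, ReLU $\sigma$ is $Q\circ\mathcal{L}_L\circ\dots\circ\mathcal{L}_1\circ R$, $(R\bar u)(x)=R(\bar u(x),x)$ ($R$ a shallow ReLU network into $\mathbb{R}^{d_v}$), $(\mathcal{L}_\ell v)(x)=\sigma(W_\ell v(x)+b_\ell(x)+\sum_{|k|\le k_{\max}}P_\ell(k)\mathcal{F}_Nv(k)e^{ikx})$ with $W_\ell\in\mathbb{R}^{d_v\times d_v}$, $P_\ell(k)\in\mathbb{C}^{d_v\times d_v}$, real bias $b_\ell(x)=\sum_{|k|\le k_{\max}}\hat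 b_\ell(k)e^{ikx}$, $Q$ linear pointwise. Depth $=L$; size = number of tunable parameters. *)

From HB Require Import structures.
From mathcomp Require Import all_boot all_order all_algebra.
From mathcomp Require Import all_classical all_reals all_analysis.
Set Implicit Arguments. Unset Strict Implicit. Unset Printing Implicit Defensive.
Import Order.TTheory GRing.Theory Num.Theory.
Local Open Scope ring_scope.

Section FNO.
Variable R : realType.

Definition relu_vec n (v : 'cV[R]_n) : 'cV[R]_n := map_mx (fun t => Num.max t 0) v.

(* periodized indicator: h * 1_{[-w/2,w/2]}(x - xi), x in R viewed mod 2pi *)
Definition box_input (h w xi : R) (x : R) : R :=
  if `[< exists m : int, `|x - xi - m%:~R * (2 * pi)| <= w / 2 >] then h else 0.

(* shallow ReLU lifting network R^2 -> R^dv (input (u(x), x)) of hidden width m *)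
Record lifting (dv m : nat) := Lifting {
  lift_A1 : 'M[R]_(m, 2); lift_c1 : 'cV[R]_m;
  lift_A2 : 'M[R]_(dv, m); lift_c2 : 'cV[R]_dv }.

Definition eval_lifting dv m (P : lifting dv m) (u x : R) : 'cV[R]_dv :=
  lift_A2 P *m relu_vec (lift_A1 P *m (\col_i (if val i == 0%N then u else x))
                          + lift_c1 P) + lift_c2 P.

(* Fourier layer: W, P(k) = A k + i B k (complex dv x dv), real bias
   b(x) = Re sum_k bhat(k) e^{ikx} with bhat(k) = bc k + i bs k *)
Record fno_layer (dv : nat) := FnoLayer {
  lay_W : 'M[R]_dv;
  lay_A : int -> 'M[R]_dv; lay_B : int -> 'M[R]_dv;
  lay_bc : int -> 'cV[R]_dv; lay_bs : int -> 'cV[R]_dv }.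

(* grid points x_j = 2 pi j / N, j = 0..N-1 (same set as j = 1..N in T) *)
Definition grid_pt (N : nat) (j : nat) : R := 2 * pi * j%:R / N%:R.

Definition freq (kmax : nat) (i : 'I_(2 * kmax).+1) : int := (i%:Z - kmax%:Z)%R.

(* real and (minus) imaginary parts of F_N v(k) = Fc - i Fs *)
Definition Fcos dv (N : nat) (v : R -> 'cV[R]_dv) (k : int) : 'cV[R]_dv :=
  N%:R^-1 *: \sum_(j < N) (cos (k%:~R * grid_pt N j) *: v (grid_pt N j)).
Definition Fsin dv (N : nat) (v : R -> 'cV[R]_dv) (k : int) : 'cV[R]_dv :=
  N%:R^-1 *: \sum_(j < N) (sin (k%:~R * grid_pt N j) *: v (grid_pt N j)).

(* (L v)(x) = sigma(W v(x) + b(x) + Re sum_{|k|<=kmax} P(k) F_N v(k) e^{ikx}) *)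
Definition eval_layer dv (N kmax : nat) (L : fno_layer dv)
    (v : R -> 'cV[R]_dv) (x : R) : 'cV[R]_dv :=
  relu_vec (lay_W L *m v x
    + \sum_(i < (2 * kmax).+1)
        (let k := freq i in
         cos (k%:~R * x) *: lay_bc L k - sin (k%:~R * x) *: lay_bs L k)
    + \sum_(i < (2 * kmax).+1)
        (let k := freq i in
         cos (k%:~R * x) *: (lay_A L k *m Fcos N v k + lay_B L k *m Fsin N v k)
       - sin (k%:~R * x) *: (lay_B L k *m Fcos N v k - lay_A L k *m Fsin N v k))).

Definition eval_layers dv N kmax (Ls : seq (fno_layer dv)) (v : R -> 'cV[R]_dv)
  : R -> 'cV[R]_dv := foldl (fun w L => eval_layer N kmax L w) v Ls.

Record FNO := MkFNO {
  fno_dv : nat; fno_width : nat; fno_kmax : nat;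
  fno_lift : lifting fno_dv fno_width;
  fno_layers : seq (fno_layer fno_dv);
  fno_Q : 'rV[R]_fno_dv }.

Definition fno_depth (F : FNO) : nat := size (fno_layers F).

(* number of tunable real parameters (complex parameters count twice) *)
Definition fno_size (F : FNO) : nat :=
  let dv := fno_dv F in let m := fno_width F in let K := (2 * fno_kmax F).+1 in
  (2 * m + m + dv * m + dv)
  + fno_depth F * (dv * dv + 2 * K * (dv * dv) + 2 * K * dv)
  + dv.

(* output function of the FNO with grid size N on input u : T -> R
   (functions on T represented as functions on R, evaluated at x in [0,2pi)) *)
Definition eval_fno (F : FNO) (N : nat) (u : R -> R) (x : R) : R :=
  (fno_Q F *m eval_layers N (fno_kmax F) (fno_layers F)
             (fun y => eval_lifting (fno_lift F) (u y) y) x) 0 0.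

End FNO.

From mathcomp Require Import all_boot all_order all_algebra.
From mathcomp Require Import all_classical all_reals all_analysis.
From mathcomp Require Import lra ring zify.
Set Implicit Arguments. Unset Strict Implicit. Unset Printing Implicit Defensive.
Import Order.TTheory GRing.Theory Num.Theory.
Local Open Scope ring_scope.

(* The lifting sends u(x) to ramp(u(x)/hl), with ramp t = min(max(t, 0), 1);
   on a box input of height h >= hl this is exactly the indicator of the box.
   A single Fourier layer with kmax = 0 multiplies the grid mean F_N v(0) by
   2pi, so the network outputs q = 2pi/N times the number of grid points in
   the box.  The grid point j q lies in the box iff some k = j mod N lies in
   the integer window [ceil((xi - w/2)/q), floor((xi + w/2)/q)]; since w < 2pi
   that window has at most N elements, hence exactly as many as there are such
   grid points, and its length differs from w/q by at most 1.  The output is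
   thus within q of w. *)

Lemma floor_sub_ceil_bounds (R : archiRealDomainType) (a b : R) :
  b - a - 1 < (Num.floor b - Num.ceil a + 1)%:~R <= b - a + 1.
Proof.
have fl := floor_le b; have /andP[_ fu] := floor_itv b.
have cu := ceil_ge a; have cl := ceilB1_lt a.
rewrite intrD in fu; rewrite intrB in cl.
by rewrite intrD intrB; apply/andP; split; lra.
Qed.

Lemma sum_mod_window (R : nzSemiRingType) (N L : nat) (n0 : int) :
  (0 < N)%N -> (L <= N)%N ->
  \sum_(j < N) (if ((j%:Z - n0) %% N%:Z)%Z < L%:Z then 1 else 0) = L%:R :> R.
Proof.
case: N => // n _ leLN.
set c := `|((- n0) %% n.+1%:Z)%Z|%N.
have shiftE (j : 'I_n.+1) : ((j%:Z - n0) %% n.+1%:Z)%Z = ((j + c) %% n.+1)%N%:Z.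
  by rewrite -modz_nat PoszD /c gez0_abs ?modz_ge0 // modzDmr.
under eq_bigr => j _ do rewrite shiftE ltz_nat -modnDmr -[X in (X < L)%N]/(val (j + inZp c)).
transitivity (\sum_(i < n.+1) (if (i < L)%N then 1 else 0) : R).
  by rewrite [RHS](reindex_inj (addIr (inZp c))).
by rewrite -big_mkcond /= -(big_ord_widen _ (fun=> 1) leLN) sumr_const card_ord.
Qed.

Section GridWindow.
Variables (R : archiRealFieldType) (q c r : R).
Hypothesis q_gt0 : 0 < q.

Definition window_first : int := Num.ceil ((c - r) / q).
Definition window_last : int := Num.floor ((c + r) / q).
Definition window_count : int := window_last - window_first + 1.

Lemma window_memE (k : int) :
  (`|k%:~R * q - c| <= r) = (window_first <= k <= window_last).
Proof.
rewrite ler_norml ceil_le_int floor_ge_int ler_pdivrMr // ler_pdivlMr //.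
by apply/idP/idP => /andP[lo hi]; apply/andP; split; lra.
Qed.

Lemma window_count_bounds :
  2 * r / q - 1 < window_count%:~R <= 2 * r / q + 1.
Proof.
have -> : 2 * r / q = (c + r) / q - (c - r) / q by field; rewrite gt_eqF.
exact: floor_sub_ceil_bounds.
Qed.

Lemma window_count_ge0 : 0 <= r -> 0 <= window_count.
Proof.
move=> r_ge0; have /andP[lo _] := window_count_bounds.
have : 0 <= 2 * r / q by apply: divr_ge0; [apply: mulr_ge0 | apply: ltW].
move=> ?; have : (-1)%:~R < window_count%:~R :> R by rewrite intrN; lra.
by rewrite ltr_int; lia.
Qed.

Lemma window_count_le (N : nat) : 2 * r < N%:R * q -> window_count <= N%:Z.
Proof.
move=> small_r; have /andP[_ hi] := window_count_bounds.
have : 2 * r / q < N%:R by rewrite ltr_pdivrMr // mulrC.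
move=> ?; have : window_count%:~R < (N%:Z + 1)%:~R :> R by rewrite intrD; lra.
by rewrite ltr_int; lia.
Qed.

Lemma window_count_approx : `|q * window_count%:~R - 2 * r| <= q.
Proof.
have /andP[lo hi] := window_count_bounds.
have qE : q * (2 * r / q) = 2 * r by field; rewrite gt_eqF.
rewrite -qE -mulrBr normrM gtr0_norm //; apply: ler_piMr; first exact: ltW.
by rewrite ler_norml; apply/andP; split; lra.
Qed.

Lemma window_mod (N : nat) (j : int) : (0 < N)%N -> window_count <= N%:Z ->
  (exists m : int, `|(j + m * N%:Z)%:~R * q - c| <= r)
  <-> ((j - window_first) %% N%:Z)%Z < window_count.
Proof.
rewrite /window_count => N_gt0 count_le; split.
- move=> [m]; rewrite window_memE => /andP[lo hi].
  have -> : j - window_first = - m * N%:Z + (j + m * N%:Z - window_first) by ring.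
  by rewrite modzMDl modz_small; lia.
- move=> in_window; exists (- ((j - window_first) %/ N%:Z)%Z).
  rewrite window_memE; move: in_window.
  have := divz_eq (j - window_first) N%:Z.
  have : 0 <= ((j - window_first) %% N%:Z)%Z by rewrite modz_ge0 // eqz_nat -lt0n.
  set k := ((j - window_first) %/ N%:Z)%Z.
  by set s := ((j - window_first) %% N%:Z)%Z; lia.
Qed.
End GridWindow.

Definition ramp (R : realDomainType) (t : R) : R := Num.max t 0 - Num.max (t - 1) 0.

Lemma ramp0 (R : realDomainType) : ramp (0 : R) = 0.
Proof. by rewrite /ramp maxxx max_r; [rewrite subrr | lra]. Qed.

Lemma ramp_ge1 (R : realDomainType) (t : R) : 1 <= t -> ramp t = 1.
Proof. by move=> ge1; rewrite /ramp !max_l ?subr_ge0 //; [ring | lra]. Qed.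

Lemma box_input_grid (R : realType) (N : nat) (h w xi : R) (j : nat) :
  (0 < N)%N ->
  let q := 2 * pi / N%:R in
  window_count q xi (w / 2) <= N%:Z ->
  box_input h w xi (grid_pt R N j) =
  if ((j%:Z - window_first q xi (w / 2)) %% N%:Z)%Z < window_count q xi (w / 2)
  then h else 0.
Proof.
move=> N_gt0 q count_le.
have q_gt0 : 0 < q by rewrite divr_gt0 ?mulr_gt0 ?pi_gt0 ?ltr0n.
have inW := window_mod q_gt0 _ N_gt0 count_le.
have gridE (m : int) : grid_pt R N j - xi - m%:~R * (2 * pi)
    = (j%:Z + (- m) * N%:Z)%:~R * q - xi.
  by rewrite /grid_pt /q intrD intrM intrN; field; rewrite pnatr_eq0 -lt0n.
rewrite /box_input; congr (if _ then _ else _).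
apply/asboolP/idP => [[m]|/inW[m]]; last by exists (- m); rewrite gridE opprK.
by rewrite gridE => near; apply/inW; exists (- m).
Qed.

Section BoxWidthFNO.
Variables (R : realType) (hl : R).
Hypothesis hl_gt0 : 0 < hl.

Definition ramp_lifting : lifting R 1 2 :=
  Lifting (\matrix_(i, j) (if val j == 0%N then hl^-1 else 0))
          (\col_i (if val i == 0%N then 0 else -1))
          (\row_j (if val j == 0%N then 1 else -1)) 0.

Definition mean_layer : fno_layer R 1 :=
  FnoLayer 0 (fun _ => (2 * pi)%:M) (fun _ => 0) (fun _ => 0) (fun _ => 0).

Definition box_width_fno : FNO R :=
  @MkFNO R 1 2 0 ramp_lifting [:: mean_layer] (const_mx 1).

Lemma eval_ramp_lifting u x : eval_lifting ramp_lifting u x 0 0 = ramp (hl^-1 * u).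
Proof.
rewrite /eval_lifting /= !mxE !big_ord_recr big_ord0 /= !mxE /=.
by rewrite !big_ord_recr !big_ord0 /= !mxE /= !add0r !mul0r !addr0 mul1r mulN1r.
Qed.

Lemma eval_box_width_fno N u x : eval_fno box_width_fno N u x =
  Num.max (2 * pi * (N%:R^-1 * \sum_(j < N) ramp (hl^-1 * u (grid_pt R N j)))) 0.
Proof.
rewrite /eval_fno /eval_layers /= /eval_layer /= !big_ord1.
have -> : freq (kmax:=0) ord0 = 0 by [].
rewrite mul0r cos0 sin0 !scale1r !scale0r !mul0mx ?scaler0 !subr0 !add0r addr0.
rewrite mul_scalar_mx mxE big_ord1 [const_mx _ _ _]mxE mul1r /relu_vec !mxE summxE.
congr (Num.max (_ * (_ * _)) _); apply: eq_bigr => j _.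
by rewrite mxE mulr0z mul0r cos0 mul1r eval_ramp_lifting.
Qed.

Lemma box_width_fno_error (N : nat) (h w xi x : R) :
  (0 < N)%N -> hl <= h -> 0 <= w < 2 * pi ->
  `|eval_fno box_width_fno N (box_input h w xi) x - w| <= 2 * pi / N%:R.
Proof.
move=> N_gt0 hl_le_h /andP[w_ge0 w_lt_2pi].
set q : R := 2 * pi / N%:R.
have q_gt0 : 0 < q by rewrite divr_gt0 ?mulr_gt0 ?pi_gt0 ?ltr0n.
have count_ge0 : 0 <= window_count q xi (w / 2).
  by apply: window_count_ge0 => //; lra.
have count_le : window_count q xi (w / 2) <= N%:Z.
  apply: window_count_le => //; rewrite /q [N%:R * _]mulrC divfK ?pnatr_eq0 -?lt0n //; lra.
have sumE : \sum_(j < N) ramp (hl^-1 * box_input h w xi (grid_pt R N j))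
    = (window_count q xi (w / 2))%:~R.
  have abs_le : (`|window_count q xi (w / 2)|%N <= N)%N by rewrite -lez_nat gez0_abs.
  rewrite -[in RHS](gez0_abs count_ge0) -[RHS]/(`|window_count q xi (w / 2)|%N%:R).
  rewrite -(sum_mod_window _ (window_first q xi (w / 2)) N_gt0 abs_le).
  apply: eq_bigr => j _; rewrite box_input_grid // gez0_abs //.
  case: ifP => _; last by rewrite mulr0 ramp0.
  by rewrite ramp_ge1 // ler_pdivlMl // mulr1.
have approx := window_count_approx xi (w / 2) q_gt0.
rewrite (_ : 2 * (w / 2) = w) in approx; last by field.
rewrite eval_box_width_fno sumE mulrA -/q max_l //.
by rewrite mulr_ge0 ?ler0z // ltW.
Qed.
End BoxWidthFNO.

Theorem mainTheorem12 (R : realType) (hl hu wl wu : R) :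
  0 < hl -> hl < hu -> 0 < wl -> wl < wu -> wu < 2 * pi ->
  exists C : R, 0 < C /\
  forall N : nat, (0 < N)%N ->
  exists F : FNO R,
    [/\ fno_kmax F = 0%N,
        (fno_dv F)%:R <= C /\ (fno_depth F)%:R <= C,
        (fno_size F)%:R <= C,
        (forall (u : R -> R) (x y : R), 0 <= x < 2 * pi -> 0 <= y < 2 * pi ->
           eval_fno F N u x = eval_fno F N u y) &
        (forall h w xi : R, hl <= h <= hu -> wl <= w <= wu -> 0 <= xi <= 2 * pi ->
           forall x : R, 0 <= x < 2 * pi ->
             `|eval_fno F N (box_input h w xi) x - w| <= C / N%:R)].
Proof.
move=> hl_gt0 _ wl_gt0 _ wu_lt_2pi.
have pi_gt0 : 0 < pi :> R := pi_gt0 R.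
exists (15 + 2 * pi); split; first lra.
have small_le_C (n : nat) : (n <= 15)%N -> n%:R <= 15 + 2 * pi :> R.
  by rewrite -(ler_nat R) => ?; lra.
move=> N N_gt0; exists (box_width_fno hl); split => //.
- by split; apply: small_le_C.
- exact: small_le_C.
- by move=> u x y _ _; rewrite !eval_box_width_fno.
move=> h w xi /andP[hl_le_h _] /andP[wl_le_w w_le_wu] _ x _.
apply: le_trans (box_width_fno_error hl_gt0 xi x N_gt0 hl_le_h _) _.
  by apply/andP; split; lra.
by rewrite ler_pM2r ?invr_gt0 ?ltr0n //; lra.
Qed.
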